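(* Let $f$ be as in the standing setting and suppose $f$ satisfies quadratic functional growth with constant $\kappa_f>0$: $$f(x)-f^*\ge\frac{\kappa_f}{2}\|x-\bar x\|^2\qquad\forall x\in X.$$ Let $\mu_f=\kappa_f/L_f$. Then $f$ satisfies the global error bound $$\|g(x)\|\ge\frac{\kappa_f}{1+\mu_f+\sqrt{1+\mu_f}}\,\|x-\bar x\|\qquad\forall x\in X.$$
   Context: Standing setting: $X\subseteq\mathbb{R}^n$ is a nonempty closed convex set; $f:X\to\mathbb{R}$ is convex and continuously differentiable, with $L_f$-Lipschitz continuous gradient on $X$ ($L_f>0$). Consider $f^*=\min_{x\in X}f(x)$ with optimal set $X^*$ nonempty and closed and $f^*$ finite. $\|\cdot\|$ is the Euclidean norm, $[u]_S$ is the Euclidean projection onto a closed convex set $S$, and $\bar x=[x]_{X^*}$. The gradient mapping is $g(x)=L_f\big(x-x^+\big)$ with $x^+=[x-\frac1{L_f}\nabla f(x)]_X$. *)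

From Stdlib Require Import Reals.
From mathcomp Require Import ssreflect ssrfun ssrbool eqtype ssrnat seq fintype bigop.

Set Implicit Arguments.
Unset Strict Implicit.

Local Open Scope R_scope.

Definition vec (n : nat) := 'I_n -> R.

Definition vadd {n} (x y : vec n) : vec n := fun i => x i + y i.
Definition vsub {n} (x y : vec n) : vec n := fun i => x i - y i.
Definition vscale {n} (a : R) (x : vec n) : vec n := fun i => a * x i.

Definition dot {n} (x y : vec n) : R := \big[Rplus/0]_(i < n) (x i * y i).
Definition vnorm {n} (x : vec n) : R := sqrt (dot x x).

Definition closed_vset {n} (S : vec n -> Prop) : Prop :=
  forall x, (forall eps, 0 < eps -> exists y, S y /\ vnorm (vsub x y) < eps) -> S x.

Definition convex_vset {n} (S : vec n -> Prop) : Prop :=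
  forall x y t, S x -> S y -> 0 <= t <= 1 ->
    S (vadd (vscale t x) (vscale (1 - t) y)).

Definition is_proj {n} (S : vec n -> Prop) (x p : vec n) : Prop :=
  S p /\ forall y, S y -> vnorm (vsub x p) <= vnorm (vsub x y).

Definition convex_on {n} (X : vec n -> Prop) (f : vec n -> R) : Prop :=
  forall x y t, X x -> X y -> 0 <= t <= 1 ->
    f (vadd (vscale t x) (vscale (1 - t) y)) <= t * f x + (1 - t) * f y.

Definition has_gradient {n} (f : vec n -> R) (x gx : vec n) : Prop :=
  forall eps, 0 < eps -> exists delta, 0 < delta /\
    forall y, vnorm (vsub y x) < delta ->
      Rabs (f y - f x - dot gx (vsub y x)) <= eps * vnorm (vsub y x).

Definition continuous_on_vec {n} (X : vec n -> Prop) (g : vec n -> vec n) : Prop :=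
  forall x, X x -> forall eps, 0 < eps -> exists delta, 0 < delta /\
    forall y, X y -> vnorm (vsub y x) < delta -> vnorm (vsub (g y) (g x)) < eps.

Definition lipschitz_on_vec {n} (X : vec n -> Prop) (g : vec n -> vec n) (L : R) : Prop :=
  forall x y, X x -> X y -> vnorm (vsub (g x) (g y)) <= L * vnorm (vsub x y).

Definition optset {n} (X : vec n -> Prop) (f : vec n -> R) (fstar : R) : vec n -> Prop :=
  fun x => X x /\ f x = fstar.

From Stdlib Require Import Reals Lra Psatz Classical ClassicalEpsilon FunctionalExtensionality.
From HB Require Import structures.
From mathcomp Require Import ssreflect ssrfun ssrbool eqtype ssrnat fintype bigop.

(* Let x+ be the projected gradient step from x and p the projection of x+ onto X*.
   Set u = x - x+ and w = x+ - p, so that ||g(x)|| = L ||u||.  The descent lemma at x,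
   the gradient inequality between x and p and the variational inequality
   characterizing x+ give f(x+) - f* <= L ||u|| ||w|| + L/2 ||u||^2, while quadratic
   growth at x+ gives f(x+) - f* >= kappa/2 ||w||^2.  Hence ||w|| is at most the
   positive root, kappa ||w|| <= L (1 + sqrt(1 + mu)) ||u||, and
   ||x - xbar|| <= ||x - p|| <= ||u|| + ||w|| yields the bound.
   The descent lemma is obtained without integration, by applying the gradient
   inequality along a grid of the segment [x, y] and letting the mesh go to 0;
   projections onto X* exist by completeness of R^n (minimizing sequences are
   Cauchy by the parallelogram law). *)

Set Implicit Arguments.
Unset Strict Implicit.

Local Open Scope R_scope.

HB.instance Definition _ := Monoid.isComLaw.Build R 0 Rplus
  (fun a b c => esym (Rplus_assoc a b c)) Rplus_comm Rplus_0_l.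

Lemma sum_ge0 n (F : 'I_n -> R) :
  (forall i, 0 <= F i) -> 0 <= \big[Rplus/0]_(i < n) F i.
Proof. by move=> F_ge0; apply: big_ind => //; [lra | move=> a b; lra]. Qed.

Lemma Rmult_sum_distr_l n (a : R) (F : 'I_n -> R) :
  a * \big[Rplus/0]_(i < n) F i = \big[Rplus/0]_(i < n) (a * F i).
Proof. by apply: big_endo; [exact: Rmult_plus_distr_l | exact: Rmult_0_r]. Qed.

Lemma sum_term_le n (F : 'I_n -> R) i :
  (forall j, 0 <= F j) -> F i <= \big[Rplus/0]_(j < n) F j.
Proof.
move=> F_ge0; rewrite (bigD1 i) //= -{1}[F i]Rplus_0_r.
by apply: Rplus_le_compat_l; apply: big_ind => //; [lra | move=> a b; lra].
Qed.

Ltac vec_ext := apply: functional_extensionality => ?;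
  cbv [vsub vadd vscale]; first [ring | field].

Section InnerProduct.
Variable n : nat.
Implicit Types x y z : vec n.

Lemma dotC x y : dot x y = dot y x.
Proof. by apply: eq_bigr => i _; ring. Qed.

Lemma dotDl x y z : dot (vadd x y) z = dot x z + dot y z.
Proof. by rewrite /dot -big_split /=; apply: eq_bigr => i _; rewrite /vadd; ring. Qed.

Lemma dotZl a x z : dot (vscale a x) z = a * dot x z.
Proof. by rewrite /dot Rmult_sum_distr_l; apply: eq_bigr => i _; rewrite /vscale; ring. Qed.

Lemma dotBl x y z : dot (vsub x y) z = dot x z - dot y z.
Proof.
have -> : vsub x y = vadd x (vscale (-1) y) by vec_ext.
by rewrite dotDl dotZl; ring.
Qed.

Lemma dotDr x y z : dot z (vadd x y) = dot z x + dot z y.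
Proof. by rewrite dotC dotDl !(dotC z). Qed.

Lemma dotZr a x z : dot z (vscale a x) = a * dot z x.
Proof. by rewrite dotC dotZl (dotC z). Qed.

Lemma dotBr x y z : dot z (vsub x y) = dot z x - dot z y.
Proof. by rewrite dotC dotBl !(dotC z). Qed.

Lemma dot_self_ge0 x : 0 <= dot x x.
Proof. by apply: sum_ge0 => i; nra. Qed.

Lemma sqr_coord_le_dot x i : x i * x i <= dot x x.
Proof. by apply: (@sum_term_le n (fun j => x j * x j)) => j; nra. Qed.

Lemma vnorm_ge0 x : 0 <= vnorm x.
Proof. exact: sqrt_pos. Qed.

Lemma vnorm_sqr x : vnorm x * vnorm x = dot x x.
Proof. exact/sqrt_sqrt/dot_self_ge0. Qed.

Lemma vnorm_le x y : dot x x <= dot y y -> vnorm x <= vnorm y.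
Proof. exact: sqrt_le_1_alt. Qed.

Lemma dot_le_of_vnorm_le x y : vnorm x <= vnorm y -> dot x x <= dot y y.
Proof. by rewrite -!vnorm_sqr => le_xy; apply: Rmult_le_compat => //; exact: vnorm_ge0. Qed.

Lemma vnorm_scale a x : 0 <= a -> vnorm (vscale a x) = a * vnorm x.
Proof.
move=> a_ge0; rewrite /vnorm dotZl dotZr -Rmult_assoc.
by rewrite sqrt_mult ?sqrt_square //; [nra | exact: dot_self_ge0].
Qed.

Lemma vnorm_eq0_coord x i : vnorm x = 0 -> x i = 0.
Proof.
move=> x0; have := sqr_coord_le_dot x i; rewrite -vnorm_sqr x0; nra.
Qed.

Lemma cauchy_schwarz x y : dot x y <= vnorm x * vnorm y.
Proof.
have [x0|Nx] := Req_dec (vnorm x) 0.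
  rewrite x0 Rmult_0_l /dot big1; first exact: Rle_refl.
  by move=> i _; rewrite (vnorm_eq0_coord i x0) Rmult_0_l.
have [y0|Ny] := Req_dec (vnorm y) 0.
  rewrite y0 Rmult_0_r /dot big1; first exact: Rle_refl.
  by move=> i _; rewrite (vnorm_eq0_coord i y0) Rmult_0_r.
(* 0 <= | |y| x - |x| y |^2 = 2 |x| |y| (|x| |y| - <x, y>) *)
have := dot_self_ge0 (vsub (vscale (vnorm y) x) (vscale (vnorm x) y)).
rewrite !dotBl !dotBr !dotZl !dotZr (dotC y x) -!vnorm_sqr.
have : 0 < vnorm x * vnorm y.
  by apply: Rmult_lt_0_compat; have := vnorm_ge0 x; have := vnorm_ge0 y; lra.
move=> ? ?; nra.
Qed.

Lemma vnorm_triangle x y : vnorm (vadd x y) <= vnorm x + vnorm y.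
Proof.
rewrite -[_ + _]sqrt_square; last by have := vnorm_ge0 x; have := vnorm_ge0 y; lra.
apply: sqrt_le_1_alt; rewrite dotDl !dotDr (dotC y x) -!vnorm_sqr.
have := cauchy_schwarz x y; move=> ?; nra.
Qed.

Lemma vnorm_sub_triangle x y z :
  vnorm (vsub x z) <= vnorm (vsub x y) + vnorm (vsub y z).
Proof.
have -> : vsub x z = vadd (vsub x y) (vsub y z) by vec_ext.
exact: vnorm_triangle.
Qed.

End InnerProduct.

Definition seg n (t : R) (y x : vec n) : vec n := vadd (vscale t y) (vscale (1 - t) x).

Lemma seg_subr n t (y x : vec n) : vsub (seg t y x) x = vscale t (vsub y x).
Proof. rewrite /seg; vec_ext. Qed.

Lemma seg_sub n s t (y x : vec n) :
  vsub (seg s y x) (seg t y x) = vscale (s - t) (vsub y x).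
Proof. rewrite /seg; vec_ext. Qed.

Lemma seg0 n (y x : vec n) : seg 0 y x = x.
Proof. rewrite /seg; vec_ext. Qed.

Lemma seg1 n (y x : vec n) : seg 1 y x = y.
Proof. rewrite /seg; vec_ext. Qed.

Lemma exists_small_step c delta : 0 <= c -> 0 < delta ->
  exists t, 0 < t <= 1 /\ t * c < delta.
Proof.
move=> c_ge0 delta_gt0; exists (Rmin 1 (delta / (c + 1))); split.
  by split; [apply: Rmin_glb_lt; [lra | apply: Rdiv_lt_0_compat; lra] | exact: Rmin_l].
apply: (Rle_lt_trans _ (delta / (c + 1) * c)).
  by apply: Rmult_le_compat_r => //; exact: Rmin_r.
have -> : delta / (c + 1) * c = delta - delta / (c + 1) by field; lra.
have : 0 < delta / (c + 1) by apply: Rdiv_lt_0_compat; lra.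
lra.
Qed.

Lemma convex_grad_ineq n (X : vec n -> Prop) f g (x y : vec n) :
  convex_on X f -> has_gradient f x g -> X x -> X y ->
  f x + dot g (vsub y x) <= f y.
Proof.
move=> f_cvx f_grad Xx Xy; set d := vsub y x; set N := vnorm d.
have N_ge0 : 0 <= N by exact: vnorm_ge0.
apply: Rle_plus_epsilon => eps eps_gt0.
set c := eps / (N + 1).
have c_gt0 : 0 < c by apply: Rdiv_lt_0_compat; lra.
have cN_le : c * N <= eps.
  have -> : c * N = eps - c by rewrite /c; field; lra.
  lra.
have [delta [delta_gt0 f_approx]] := f_grad c c_gt0.
have [t [t01 tN_lt]] := exists_small_step N_ge0 delta_gt0.
have := f_approx (seg t y x); rewrite seg_subr vnorm_scale -/d -/N ?dotZr; last lra.
move=> /(_ tN_lt); rewrite -Rabs_Ropp => /(Rle_trans _ _ _ (Rle_abs _)) approx.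
have := f_cvx y x t Xy Xx ltac:(lra); rewrite -/(seg t y x) => cvx.
have : t * (dot g d - c * N) <= t * (f y - f x) by nra.
move=> /(Rmult_le_reg_l t _ _ (proj1 t01)); lra.
Qed.

Lemma proj_variational_ineq n (S : vec n -> Prop) (x p y : vec n) :
  convex_vset S -> is_proj S x p -> S y -> dot (vsub x p) (vsub y p) <= 0.
Proof.
move=> S_cvx [Sp p_min] Sy; apply: Rnot_lt_le => uw_gt0.
have [t [t01 tw_lt]] := exists_small_step (dot_self_ge0 (vsub y p)) uw_gt0.
have := p_min (seg t y p) (S_cvx _ _ t Sy Sp ltac:(lra)).
have -> : vsub x (seg t y p) = vsub (vsub x p) (vscale t (vsub y p)).
  by rewrite /seg; vec_ext.
move: (vsub x p) (vsub y p) uw_gt0 tw_lt => u w uw_gt0 tw_lt.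
(* moving from p towards y by t decreases the distance to x, as t^2 |w|^2 < t <u, w> *)
move=> /dot_le_of_vnorm_le; rewrite !dotBl !dotBr !dotZl !dotZr (dotC w u).
have : t * (t * dot w w) < t * dot u w by apply: Rmult_lt_compat_l; lra.
move=> ? ?; nra.
Qed.

Lemma le_of_le_add_div_nat a b c : 0 <= c ->
  (forall N : nat, (0 < N)%nat -> a <= b + c / INR N) -> a <= b.
Proof.
move=> c_ge0 le_ab; apply: Rle_plus_epsilon => eps eps_gt0.
have [N [N_lt N_gt0]] := archimed_cor1 (eps / (c + 1)) ltac:(apply: Rdiv_lt_0_compat; lra).
have /le_ab : (0 < N)%nat by apply/ltP.
have N_pos : 0 < INR N by exact: lt_0_INR.
suff : c / INR N <= eps by move=> ? ?; lra.
have : (c + 1) * / INR N <= (c + 1) * (eps / (c + 1)) by apply: Rmult_le_compat_l; lra.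
have -> : (c + 1) * (eps / (c + 1)) = eps by field; lra.
have : 0 <= / INR N by apply/Rlt_le/Rinv_0_lt_compat.
rewrite /Rdiv; move=> ? ?; nra.
Qed.

Section DescentLemma.
Variables (n : nat) (X : vec n -> Prop) (f : vec n -> R) (grad : vec n -> vec n) (L : R).
Hypotheses (X_cvx : convex_vset X) (f_cvx : convex_on X f)
  (f_grad : forall z, X z -> has_gradient f z (grad z))
  (grad_lip : lipschitz_on_vec X grad L).
Variables (x y : vec n).
Hypotheses (Xx : X x) (Xy : X y).

Let d := vsub y x.
Let D := dot d d.

Lemma grad_seg_le t : 0 <= t <= 1 ->
  dot (grad (seg t y x)) d <= dot (grad x) d + L * t * D.
Proof.
move=> t01; have Xz : X (seg t y x) by exact: X_cvx.
have lip := grad_lip Xz Xx; rewrite seg_subr vnorm_scale -/d in lip; last lra.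
move: (grad (seg t y x)) lip => gz lip.
have cs := cauchy_schwarz (vsub gz (grad x)) d; rewrite dotBl in cs.
have := vnorm_ge0 d; have := vnorm_ge0 (vsub gz (grad x)); have := vnorm_sqr d.
rewrite -/D => ? ? ?; nra.
Qed.

Lemma f_seg_step_le s t : 0 <= s <= t -> t <= 1 ->
  f (seg t y x) - f (seg s y x) <= (t - s) * (dot (grad x) d + L * t * D).
Proof.
move=> st t1; have Xs : X (seg s y x) by apply: X_cvx => //; lra.
have Xt : X (seg t y x) by apply: X_cvx => //; lra.
have := convex_grad_ineq f_cvx (f_grad Xt) Xt Xs.
rewrite seg_sub -/d dotZr; have := grad_seg_le (t := t) ltac:(lra).
move=> ? ?; nra.
Qed.

Lemma f_seg_grid_le N m : (0 < N)%nat -> (m <= N)%nat ->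
  f (seg (INR m / INR N) y x) - f x <=
  INR m / INR N * dot (grad x) d + L * D * (INR m * (INR m + 1)) / (2 * INR N * INR N).
Proof.
move=> /ltP /lt_0_INR N_gt0; elim: m => [|m IH] m_le.
  by rewrite /Rdiv !Rmult_0_l seg0; lra.
have m_le' : (m <= N)%nat by exact: ltnW.
have /le_INR mN : (m.+1 <= N)%coq_nat by apply/leP.
have := IH m_le'; rewrite S_INR in mN *.
have := pos_INR m; have := dot_self_ge0 d; rewrite -/D => ? ? IHm.
have := f_seg_step_le (s := INR m / INR N) (t := (INR m + 1) / INR N).
have step_pos : 0 <= INR m / INR N <= (INR m + 1) / INR N.
  have : 0 < / INR N by exact: Rinv_0_lt_compat.
  by rewrite /Rdiv; split; [apply: Rmult_le_pos | apply: Rmult_le_compat_r]; lra.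
have t_le1 : (INR m + 1) / INR N <= 1.
  by apply: (Rmult_le_reg_r (INR N)); rewrite // /Rdiv Rmult_assoc Rinv_l; lra.
move=> /(_ step_pos t_le1).
have -> : (INR m + 1) / INR N - INR m / INR N = / INR N by field; lra.
have -> : L * D * ((INR m + 1) * (INR m + 1 + 1)) / (2 * INR N * INR N) =
          L * D * (INR m * (INR m + 1)) / (2 * INR N * INR N)
          + / INR N * (L * ((INR m + 1) / INR N) * D) by field; lra.
have -> : (INR m + 1) / INR N * dot (grad x) d =
          INR m / INR N * dot (grad x) d + / INR N * dot (grad x) d by field; lra.
move=> ?; nra.
Qed.

End DescentLemma.

Lemma descent_lemma n (X : vec n -> Prop) f grad L (x y : vec n) :
  convex_vset X -> convex_on X f -> (forall z, X z -> has_gradient f z (grad z)) ->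
  0 <= L -> lipschitz_on_vec X grad L -> X x -> X y ->
  f y <= f x + dot (grad x) (vsub y x) + L / 2 * dot (vsub y x) (vsub y x).
Proof.
move=> X_cvx f_cvx f_grad L_ge0 grad_lip Xx Xy.
set G := dot (grad x) (vsub y x); set D := dot (vsub y x) (vsub y x).
have D_ge0 : 0 <= D by exact: dot_self_ge0.
suff : f y - f x - G <= L / 2 * D by lra.
apply: (le_of_le_add_div_nat (c := L / 2 * D)); first nra.
move=> N N_gt0; have N_pos : 0 < INR N by apply/lt_0_INR/ltP.
have := f_seg_grid_le X_cvx f_cvx f_grad grad_lip Xx Xy N_gt0 (leqnn N).
rewrite /Rdiv Rinv_r ?seg1; last lra.
have -> : L * D * (INR N * (INR N + 1)) * / (2 * INR N * INR N) =
          L / 2 * D + L / 2 * D * / INR N by field; lra.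
rewrite -/G -/D; lra.
Qed.

Lemma proj_grad_step_le n (X : vec n -> Prop) f grad L (x xp y : vec n) :
  convex_vset X -> convex_on X f -> (forall z, X z -> has_gradient f z (grad z)) ->
  0 < L -> lipschitz_on_vec X grad L -> X x -> X y ->
  is_proj X (vsub x (vscale (/ L) (grad x))) xp ->
  f xp - f y <= L * vnorm (vsub x xp) * vnorm (vsub xp y)
                + L / 2 * (vnorm (vsub x xp) * vnorm (vsub x xp)).
Proof.
move=> X_cvx f_cvx f_grad L_gt0 grad_lip Xx Xy xp_proj.
have Xxp : X xp by case: xp_proj.
have descent := descent_lemma X_cvx f_cvx f_grad (Rlt_le _ _ L_gt0) grad_lip Xx Xxp.
have grad_y := convex_grad_ineq f_cvx (f_grad _ Xx) Xx Xy.
have vi := proj_variational_ineq X_cvx xp_proj Xy.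
have E1 : vsub xp x = vscale (-1) (vsub x xp) by vec_ext.
have E2 : vsub y x = vscale (-1) (vadd (vsub x xp) (vsub xp y)) by vec_ext.
have E3 : vsub y xp = vscale (-1) (vsub xp y) by vec_ext.
have E4 : vsub (vsub x (vscale (/ L) (grad x))) xp =
          vsub (vsub x xp) (vscale (/ L) (grad x)) by vec_ext.
rewrite E1 in descent; rewrite E2 in grad_y; rewrite E3 E4 in vi; clear E1 E2 E3 E4.
rewrite vnorm_sqr; have cs := cauchy_schwarz (vsub x xp) (vsub xp y).
move: (vsub x xp) (vsub xp y) (grad x) descent grad_y vi cs => u w g descent grad_y vi cs.
rewrite !dotZl !dotZr dotDr in descent grad_y; rewrite dotZr dotBl dotZl in vi.
have gw_le : dot g w <= L * dot u w.
  have -> : dot g w = L * (/ L * dot g w) by field; lra.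
  by apply: Rmult_le_compat_l; lra.
have := Rmult_le_compat_l L _ _ (Rlt_le _ _ L_gt0) cs; nra.
Qed.

Lemma exists_inf_approx T (S : T -> Prop) (h : T -> R) :
  (exists y, S y) -> (forall y, S y -> 0 <= h y) ->
  exists d, (forall y, S y -> d <= h y) /\
            (forall eps, 0 < eps -> exists y, S y /\ h y < d + eps).
Proof.
move=> [y0 Sy0] h_ge0.
have [m [m_ub m_lub]] : {m | is_lub (fun r => exists2 y, S y & r = - h y) m}.
  apply: completeness; last by exists (- h y0), y0.
  by exists 0 => _ [y /h_ge0 ? ->]; lra.
exists (- m); split.
  by move=> y Sy; have := m_ub (- h y) (ex_intro2 _ _ y Sy erefl); lra.
move=> eps eps_gt0; apply: NNPP => no_y.
suff : m <= m - eps by lra.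
apply: m_lub => _ [y Sy ->]; apply: Rnot_lt_le => lt_y; apply: no_y.
by exists y; split; [| lra].
Qed.

Lemma cv_const (c : R) : Un_cv (fun _ => c) c.
Proof. by move=> eps eps_gt0; exists 0%nat => k _; rewrite /Rdist Rminus_diag Rabs_R0. Qed.

Lemma cv_sum n (F : nat -> 'I_n -> R) (l : 'I_n -> R) :
  (forall i, Un_cv (fun k => F k i) (l i)) ->
  Un_cv (fun k => \big[Rplus/0]_(i < n) F k i) (\big[Rplus/0]_(i < n) l i).
Proof.
elim: n F l => [|n IH] F l F_cv.
  by under [fun k => _]functional_extensionality => k do rewrite big_ord0;
     rewrite big_ord0; exact: cv_const.
under [fun k => _]functional_extensionality => k do rewrite big_ord_recr.
rewrite big_ord_recr; apply: CV_plus; last exact: F_cv.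
exact: (IH (fun k i => F k (widen_ord (leqnSn n) i))).
Qed.

Definition inv_succ (k : nat) : R := / (INR k + 1).

Lemma inv_succ_gt0 k : 0 < inv_succ k.
Proof. by apply: Rinv_0_lt_compat; have := pos_INR k; lra. Qed.

Lemma inv_succ_le k m : (k <= m)%nat -> inv_succ m <= inv_succ k.
Proof.
move=> /leP /le_INR km; apply: Rinv_le_contravar; have := pos_INR k; lra.
Qed.

Lemma inv_succ_small a : 0 < a -> exists k, inv_succ k < a.
Proof.
move=> a_gt0; have [k [k_lt k_gt0]] := archimed_cor1 a a_gt0; exists k.
apply: Rle_lt_trans k_lt; apply: Rinv_le_contravar; first exact: lt_0_INR.
lra.
Qed.

Lemma vec_cauchy_cv n (ys : nat -> vec n) :
  (forall eps, 0 < eps -> exists K, forall k m, (K <= k)%nat -> (K <= m)%nat ->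
     dot (vsub (ys k) (ys m)) (vsub (ys k) (ys m)) < eps) ->
  exists z : vec n, forall i, Un_cv (fun k => ys k i) (z i).
Proof.
move=> ys_cauchy.
have ys_i_cauchy i : Cauchy_crit (fun k => ys k i).
  move=> eps eps_gt0; have [K K_ok] := ys_cauchy (eps * eps) ltac:(nra).
  exists K => k m /leP Kk /leP Km; rewrite /Rdist -[eps]Rabs_pos_eq; last lra.
  apply: Rsqr_lt_abs_0; rewrite /Rsqr.
  have := sqr_coord_le_dot (vsub (ys k) (ys m)) i; have := K_ok k m Kk Km.
  by rewrite /vsub; lra.
exists (fun i => proj1_sig (R_complete _ (ys_i_cauchy i))) => i.
exact: proj2_sig (R_complete _ (ys_i_cauchy i)).
Qed.

Lemma cv_dot n (u v : nat -> vec n) (a b : vec n) :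
  (forall i, Un_cv (fun k => u k i) (a i)) -> (forall i, Un_cv (fun k => v k i) (b i)) ->
  Un_cv (fun k => dot (u k) (v k)) (dot a b).
Proof. by move=> u_cv v_cv; apply: cv_sum => i; apply: CV_mult. Qed.

Lemma parallelogram n (x y1 y2 : vec n) :
  dot (vsub y1 y2) (vsub y1 y2) =
  2 * dot (vsub x y1) (vsub x y1) + 2 * dot (vsub x y2) (vsub x y2)
  - 4 * dot (vsub x (seg (1 / 2) y1 y2)) (vsub x (seg (1 / 2) y1 y2)).
Proof.
have -> : vsub y1 y2 = vsub (vsub x y2) (vsub x y1) by vec_ext.
have -> : vsub x (seg (1 / 2) y1 y2) = vscale (1 / 2) (vadd (vsub x y1) (vsub x y2)).
  by rewrite /seg; vec_ext.
move: (vsub x y1) (vsub x y2) => a b.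
by rewrite !dotBl !dotBr !dotZl !dotZr !dotDl !dotDr (dotC b a); field.
Qed.

Section ProjectionExists.
Variables (n : nat) (S : vec n -> Prop) (x : vec n).
Hypotheses (S_closed : closed_vset S) (S_cvx : convex_vset S).

Let sqd (y : vec n) := dot (vsub x y) (vsub x y).

Lemma sqdist_sub_le d y1 y2 : (forall y, S y -> d <= sqd y) -> S y1 -> S y2 ->
  dot (vsub y1 y2) (vsub y1 y2) <= 2 * sqd y1 + 2 * sqd y2 - 4 * d.
Proof.
move=> d_low Sy1 Sy2.
have := d_low (seg (1 / 2) y1 y2) (@S_cvx _ _ (1 / 2) Sy1 Sy2 ltac:(lra)).
by rewrite (parallelogram x) /sqd => ?; lra.
Qed.

Lemma proj_exists : (exists y, S y) -> exists p, is_proj S x p.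
Proof.
move=> S_ne.
have [d [d_low d_approx]] := exists_inf_approx (h := sqd) S_ne (fun y _ => dot_self_ge0 _).
have [ys ys_ok] : exists ys : nat -> vec n, forall k, S (ys k) /\ sqd (ys k) < d + inv_succ k.
  exists (fun k =>
    proj1_sig (constructive_indefinite_description _ (d_approx _ (inv_succ_gt0 k)))).
  by move=> k; case: (constructive_indefinite_description _ _).
have [z z_cv] : exists z, forall i, Un_cv (fun k => ys k i) (z i).
  apply: vec_cauchy_cv => eps eps_gt0.
  have [K K_lt] : exists K, inv_succ K < eps / 4 by apply: inv_succ_small; lra.
  exists K => k m Kk Km.
  have [[Sk dk] [Sm dm]] := (ys_ok k, ys_ok m).
  have := sqdist_sub_le d_low Sk Sm; have := inv_succ_le Kk; have := inv_succ_le Km.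
  lra.
have sqd_cv : Un_cv (fun k => sqd (ys k)) (sqd z).
  by apply: cv_dot => i; apply: CV_minus => //; exact: cv_const.
have dist_cv : Un_cv (fun k => dot (vsub z (ys k)) (vsub z (ys k))) 0.
  have -> : 0 = dot (vsub z z) (vsub z z) by rewrite !dotBl !dotBr; ring.
  by apply: cv_dot => i; apply: CV_minus => //; exact: cv_const.
exists z; split.
  apply: S_closed => eps eps_gt0; have [K K_ok] := dist_cv (eps * eps) ltac:(nra).
  exists (ys K); split; first by case: (ys_ok K).
  have := K_ok K (le_n K); rewrite /Rdist Rminus_0_r Rabs_pos_eq; last exact: dot_self_ge0.
  by rewrite -vnorm_sqr => ?; have := vnorm_ge0 (vsub z (ys K)); move=> ?; nra.
(* sqd z is a limit of values sqd (ys k) < d + inv_succ k, hence at most d *)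
move=> y Sy; apply/vnorm_le/(Rle_trans _ d); last exact: d_low.
apply: Rle_plus_epsilon => eps eps_gt0; have [K K_lt] := inv_succ_small eps_gt0.
apply: (Rle_trans _ (d + inv_succ K)); last lra.
apply: (Rle_cv_lim _ (CV_shift' _ K _ sqd_cv) (cv_const _)) => k /=.
have [_ dk] := ys_ok (k + K)%coq_nat.
have := inv_succ_le (introT leP (Nat.le_add_l K k)); lra.
Qed.

End ProjectionExists.

Lemma optset_convex n (X : vec n -> Prop) f fstar :
  convex_vset X -> convex_on X f -> (forall x, X x -> fstar <= f x) ->
  convex_vset (optset X f fstar).
Proof.
move=> X_cvx f_cvx f_ge x y t [Xx fx] [Xy fy] t01.
have Xz := X_cvx x y t Xx Xy t01; split => //.
by apply: Rle_antisym; [have := f_cvx x y t Xx Xy t01; rewrite fx fy | exact: f_ge]; nra.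
Qed.

Lemma quadratic_root_bound L k a b : 0 < L -> 0 < k -> 0 <= a -> 0 <= b ->
  k / 2 * (b * b) <= L * a * b + L / 2 * (a * a) ->
  k * b <= L * a * (1 + sqrt (1 + k / L)).
Proof.
move=> L_gt0 k_gt0 a_ge0 b_ge0 quad; apply: Rnot_lt_le => lt_kb.
have kL_gt0 : 0 < k / L by apply: Rdiv_lt_0_compat.
set s := sqrt (1 + k / L) in lt_kb *; have s_ge0 : 0 <= s by exact: sqrt_pos.
have ss : L * L * (s * s) = L * L + k * L by rewrite sqrt_sqrt; [field | ]; lra.
(* b would lie beyond the positive root of k b^2 - 2 L a b - L a^2 *)
have : (L * a * s) * (L * a * s) < (k * b - L * a) * (k * b - L * a).
  have Las_ge0 : 0 <= L * a * s by apply: Rmult_le_pos => //; nra.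
  have Las_lt : L * a * s < k * b - L * a by nra.
  exact: Rmult_le_0_lt_compat.
have -> : L * a * s * (L * a * s) = a * a * (L * L * (s * s)) by ring.
rewrite ss => ?; nra.
Qed.

Lemma error_bound_of_quadratic_growth L k a b d : 0 < L -> 0 < k -> 0 <= a -> 0 <= b ->
  d <= a + b -> k / 2 * (b * b) <= L * a * b + L / 2 * (a * a) ->
  L * a >= k / (1 + k / L + sqrt (1 + k / L)) * d.
Proof.
move=> L_gt0 k_gt0 a_ge0 b_ge0 d_le quad.
have := quadratic_root_bound L_gt0 k_gt0 a_ge0 b_ge0 quad.
have := sqrt_pos (1 + k / L); have : L * (k / L) = k by field; lra.
set s := sqrt _; set mu := k / L => L_mu s_ge0 kb_le.
have mu_gt0 : 0 < mu by apply: Rdiv_lt_0_compat.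
apply: Rle_ge.
have -> : k / (1 + mu + s) * d = k * d / (1 + mu + s) by field; lra.
apply: (Rmult_le_reg_r (1 + mu + s)); first lra.
have -> : k * d / (1 + mu + s) * (1 + mu + s) = k * d by field; lra.
have : k * d <= k * a + k * b by nra.
move=> ?; nra.
Qed.

Unset Implicit Arguments.

Theorem theorem7 (n : nat) (X : vec n -> Prop) (f : vec n -> R)
  (grad : vec n -> vec n) (Lf kappa fstar : R) :
  (exists x0 : vec n, X x0) -> closed_vset X -> convex_vset X ->
  convex_on X f ->
  (forall x : vec n, X x -> has_gradient f x (grad x)) ->
  continuous_on_vec X grad ->
  0 < Lf -> lipschitz_on_vec X grad Lf ->
  (forall x : vec n, X x -> fstar <= f x) ->
  (exists xs : vec n, optset X f fstar xs) ->
  closed_vset (optset X f fstar) ->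
  0 < kappa ->
  (forall x xbar : vec n, X x -> is_proj (optset X f fstar) x xbar ->
     f x - fstar >= kappa / 2 * (vnorm (vsub x xbar))^2) ->
  forall x xplus xbar : vec n, X x ->
    is_proj X (vsub x (vscale (/ Lf) (grad x))) xplus ->
    is_proj (optset X f fstar) x xbar ->
    vnorm (vscale Lf (vsub x xplus)) >=
      kappa / (1 + kappa / Lf + sqrt (1 + kappa / Lf)) * vnorm (vsub x xbar).
Proof.
move=> _ _ X_cvx f_cvx f_grad _ L_gt0 grad_lip f_min opt_ne opt_closed kappa_gt0 growth
  x xp xb Xx xp_proj xb_proj.
have Xxp : X xp by case: xp_proj.
have [p p_proj] := proj_exists xp opt_closed (optset_convex X_cvx f_cvx f_min) opt_ne.
have [[Xp fp] _] := p_proj.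
have := growth _ _ Xxp p_proj; rewrite /= Rmult_1_r => grow.
have := proj_grad_step_le X_cvx f_cvx f_grad L_gt0 grad_lip Xx Xp xp_proj; rewrite fp => step.
have xb_le : vnorm (vsub x xb) <= vnorm (vsub x xp) + vnorm (vsub xp p).
  exact: Rle_trans (proj2 xb_proj p (conj Xp fp)) (vnorm_sub_triangle x xp p).
rewrite vnorm_scale; last lra.
apply: error_bound_of_quadratic_growth xb_le _ => //; try exact: vnorm_ge0.
exact: Rle_trans (Rge_le _ _ grow) step.
Qed.
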